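(* Let $u,v$ be homogeneous elements of $\mathfrak{B}(V)$ with $\mu(u)\cap\mu(v)=\emptyset$. If $uv=0$, then $u=0$ or $v=0$.
   Context: $V$ is a braided vector space of diagonal type over an algebraically closed field of characteristic $0$ with basis $x_1,\dots,x_n$ and braiding $C(x_i\otimes x_j)=q_{ij}x_j\otimes x_i$; $\mathfrak{B}(V)$ is its Nichols algebra, $\mathbb{Z}^n$-graded with $\deg x_i=e_i$. For a homogeneous element $w$ with $\deg w=\sum_i\lambda_ie_i$, $\mu(w):=\{x_i:\lambda_i>0\}$. *)

From HB Require Import structures.
From mathcomp Require Import all_boot all_order all_algebra.
Set Implicit Arguments. Unset Strict Implicit. Unset Printing Implicit Defensive.
Import GRing.Theory.
Local Open Scope ring_scope.

(* Braided vector space of diagonal type with basis x_0..x_(n-1) and braiding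
   c(x_i (x) x_j) = q i j x_j (x) x_i.  T(V) is the free algebra on the x_i;
   a word [:: i1; ...; ik] stands for x_i1 ... x_ik. *)
Definition word (n : nat) := seq 'I_n.

(* An element of T(V): a finite formal linear combination of words. *)
Definition tensor (K : fieldType) (n : nat) := seq (K * word n).

Definition coef (K : fieldType) n (u : tensor K n) (w : word n) : K :=
  \sum_(p <- u | p.2 == w) p.1.

Definition tmul (K : fieldType) n (u v : tensor K n) : tensor K n :=
  [seq (p.1 * r.1, p.2 ++ r.2) | p <- u, r <- v].

Definition rem_at (T : Type) (j : nat) (s : seq T) := take j s ++ drop j.+1 s.

(* symc q a w = coefficient of the word w in Omega(a), where Omega is the
   quantum symmetrizer, computed by the standard recursion
   Omega_k = (id (x) Omega_(k-1)) (1 + c_1 + c_1 c_2 + ... + c_1...c_(k-1)),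
   i.e. Omega(x_a1..x_ak) = sum_j (prod_(l<j) q a_l a_j) x_aj Omega(a minus a_j). *)
Fixpoint symc (K : fieldType) n (q : 'I_n -> 'I_n -> K) (a w : word n) : K :=
  match w with
  | [::] => (nilp a)%:R
  | b :: w' =>
      \sum_(j < size a | nth b a j == b)
        (\prod_(l < j) q (nth b a l) (nth b a j)) * symc q (rem_at j a) w'
  end.

(* u represents 0 in the Nichols algebra B(V) = T(V)/ker(Omega) *)
Definition nichols_zero (K : fieldType) n (q : 'I_n -> 'I_n -> K)
  (u : tensor K n) : Prop :=
  forall w : word n, \sum_(p <- u) p.1 * symc q p.2 w = 0.

Definition mdeg n (w : word n) (i : 'I_n) : nat := count_mem i w.

Definition homogeneous (K : fieldType) n (u : tensor K n) (d : 'I_n -> nat) : Prop :=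
  forall w : word n, coef u w != 0 -> forall i, mdeg w i = d i.

Definition mu n (d : 'I_n -> nat) : pred 'I_n := fun i => (0 < d i)%N.

From HB Require Import structures.
From mathcomp Require Import all_boot all_order all_algebra.
From Stdlib Require Import Classical.
Set Implicit Arguments. Unset Strict Implicit. Unset Printing Implicit Defensive.
Import GRing.Theory.
Local Open Scope ring_scope.

(* If the letters of [w1] and [w2] are disjoint, every term of the quantum
   symmetrizer of [a ++ b] that produces [w1 ++ w2] must first place all the
   letters of [a] (in the order of [w1]) and then those of [b], and no braiding
   factor between the two blocks occurs.  Hence Omega(uv)(w1 w2) factors as
   Omega(u)(w1) Omega(v)(w2) when u and v are homogeneous of disjoint supports,
   and nonzero coefficients of Omega(u) and of Omega(v) give one of Omega(uv).
   The argument works over any field and for any braiding matrix. *)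

Section SymmetrizerOfConcatenation.
Variables (K : fieldType) (n : nat) (q : 'I_n -> 'I_n -> K).

Lemma mem_rem_at (j : nat) (a : word n) x : x \in rem_at j a -> x \in a.
Proof. by rewrite /rem_at mem_cat => /orP [/mem_take|/mem_drop]. Qed.

Lemma mem_rem_at_neq (j : nat) (a : word n) x y :
  (j < size a)%N -> x \in a -> x != nth y a j -> x \in rem_at j a.
Proof.
move=> lt_j; rewrite -{1}(cat_take_drop j a) (drop_nth y) // mem_cat in_cons.
by move=> + /negbTE neq_x; rewrite neq_x /rem_at mem_cat.
Qed.

Lemma rem_at_catl (j : nat) (a b : word n) :
  (j < size a)%N -> rem_at j (a ++ b) = rem_at j a ++ b.
Proof.
move=> lt_j; rewrite /rem_at take_cat lt_j drop_cat.
case: ltnP => [_|ge_j]; first by rewrite catA.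
by rewrite (@anti_leq j.+1 (size a)) ?lt_j // subnn drop0 drop_size cats0.
Qed.

Lemma symc_eq0_notin_word x (a w : word n) :
  x \in a -> x \notin w -> symc q a w = 0.
Proof.
elim: w a => [|b w IHw] a a_x /=; first by case: a a_x => // y a _; rewrite mulr0n.
rewrite in_cons negb_or => /andP [neq_xb w'_x].
apply: big1 => j /eqP nth_j; rewrite (IHw _ _ w'_x) ?mulr0 //.
by apply: (mem_rem_at_neq (y := b) (ltn_ord j) a_x); rewrite nth_j.
Qed.

Lemma symc_eq0_notin_arg x (a w : word n) :
  x \in w -> x \notin a -> symc q a w = 0.
Proof.
elim: w a => [|b w IHw] a //= + a'_x; rewrite in_cons => /orP [/eqP x_b|w_x].
  by apply: big1 => j /eqP nth_j; move: a'_x; rewrite x_b -nth_j mem_nth.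
apply: big1 => j _; rewrite (IHw _ w_x) ?mulr0 //.
by apply: contra a'_x; apply: mem_rem_at.
Qed.

(* Only the letters of [a] can produce the first letter [c] of [w1]: the
   indices of [a ++ b] beyond [size a] carry letters of [b], outside [P]. *)
Lemma symc_cat (P : pred 'I_n) (a b w1 w2 : word n) :
  all P a -> all P w1 -> all (predC P) b -> all (predC P) w2 ->
  symc q (a ++ b) (w1 ++ w2) = symc q a w1 * symc q b w2.
Proof.
elim: w1 a => [|c w1 IHw1] a Pa Pw1 P'b P'w2.
  case: a Pa => [|y a] /=; first by rewrite mulr1n mul1r.
  case/andP=> Py _; rewrite mulr0n mul0r (@symc_eq0_notin_word y) ?mem_head //.
  by apply: contraL Py => /(allP P'w2).
case/andP: Pw1 => Pc Pw1; rewrite cat_cons /= size_cat big_split_ord /=.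
rewrite [X in _ + X]big1 ?addr0 => [|j]; last first.
  rewrite nth_cat ltnNge leq_addr addKn /=.
  have /(allP P'b) /= : nth c b j \in b by rewrite mem_nth.
  by move=> + /eqP nth_j; rewrite nth_j Pc.
rewrite big_distrl /=; apply: eq_big => [j|j]; first by rewrite nth_cat ltn_ord.
rewrite nth_cat ltn_ord rem_at_catl // (IHw1 _ _ Pw1 P'b P'w2); last first.
  by apply/allP => x /mem_rem_at /(allP Pa).
rewrite mulrA => _; congr (_ * _ * _); apply: eq_bigr => l _.
by rewrite nth_cat (ltn_trans (ltn_ord l)).
Qed.

End SymmetrizerOfConcatenation.

Section TensorSums.
Variables (K : fieldType) (n : nat).

Definition supported (u : tensor K n) (P : pred (word n)) :=
  forall w, coef u w != 0 -> P w.

Lemma sum_tensor_coef (u : tensor K n) (F : word n -> K) :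
  \sum_(p <- u) p.1 * F p.2 =
  \sum_(w <- undup [seq p.2 | p <- u]) coef u w * F w.
Proof.
under [RHS]eq_bigr do rewrite /coef big_distrl big_mkcond /=.
rewrite exchange_big /=; apply: eq_big_seq => p u_p.
have words_p : p.2 \in undup [seq p.2 | p <- u] by rewrite mem_undup map_f.
rewrite (big_rem _ words_p) /= eqxx big1_seq ?addr0 // => w /andP [_].
by case: eqP => // <-; rewrite mem_rem_uniqF ?undup_uniq.
Qed.

(* A linear functional of a tensor only depends on its values on the
   support, even though the list [u] may contain cancelling terms. *)
Lemma sum_tensor_eq_support (u : tensor K n) (P : pred (word n))
    (F G : word n -> K) :
  supported u P -> (forall w, P w -> F w = G w) ->
  \sum_(p <- u) p.1 * F p.2 = \sum_(p <- u) p.1 * G p.2.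
Proof.
move=> suppP eqFG; rewrite !sum_tensor_coef; apply: eq_bigr => w _.
by have [->|/suppP/eqFG->] := eqVneq (coef u w) 0; rewrite ?mul0r.
Qed.

Lemma homogeneous_supported (u : tensor K n) d :
  homogeneous u d -> supported u (all (mu d)).
Proof.
move=> hom_u w /hom_u deg_w; apply/allP => i w_i.
by rewrite /mu -deg_w /mdeg -has_count has_pred1.
Qed.

End TensorSums.

Section Omega.
Variables (K : fieldType) (n : nat) (q : 'I_n -> 'I_n -> K).

Definition omega (u : tensor K n) (w : word n) : K :=
  \sum_(p <- u) p.1 * symc q p.2 w.

Lemma omega_supported (u : tensor K n) (A : pred 'I_n) w :
  supported u (all A) -> omega u w != 0 -> all A w.
Proof.
move=> suppA; apply: contraR => /allPn [x w_x A'x]; apply/eqP.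
rewrite /omega (sum_tensor_eq_support (F := symc q ^~ w) (G := fun=> 0) suppA)
  => [|a /allP Aa].
  by rewrite big1 // => p _; rewrite mulr0.
by apply: (symc_eq0_notin_arg q w_x); apply: contra A'x => /Aa.
Qed.

Lemma omega_tmul (P : pred 'I_n) (u v : tensor K n) (w1 w2 : word n) :
  supported u (all P) -> supported v (all (predC P)) ->
  all P w1 -> all (predC P) w2 ->
  omega (tmul u v) (w1 ++ w2) = omega u w1 * omega v w2.
Proof.
move=> suppu suppv Pw1 P'w2; rewrite /omega /tmul big_allpairs_dep big_distrlr /=.
under eq_bigr do under eq_bigr do rewrite -mulrA.
under [RHS]eq_bigr do under eq_bigr do rewrite mulrACA -mulrA.
under eq_bigr do rewrite -big_distrr; under [RHS]eq_bigr do rewrite -big_distrr.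
pose F a := \sum_(r <- v) r.1 * symc q (a ++ r.2) (w1 ++ w2).
pose G a := \sum_(r <- v) r.1 * (symc q a w1 * symc q r.2 w2).
apply: (sum_tensor_eq_support (F := F) (G := G) suppu) => a Pa.
apply: (sum_tensor_eq_support (F := fun b => symc q (a ++ b) (w1 ++ w2))
  (G := fun b => symc q a w1 * symc q b w2) suppv) => b P'b.
by rewrite (symc_cat q Pa Pw1 P'b P'w2).
Qed.

End Omega.

Theorem lemma5p3 (K : closedFieldType) (hK : [pchar K] =i pred0) (n : nat)
  (q : 'I_n -> 'I_n -> K) (hq : forall i j, q i j != 0)
  (u v : tensor K n) (du dv : 'I_n -> nat)
  (hu : homogeneous u du) (hv : homogeneous v dv)
  (hdisj : forall i : 'I_n, ~~ (mu du i && mu dv i))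
  (huv : nichols_zero q (tmul u v)) :
  nichols_zero q u \/ nichols_zero q v.
Proof.
have [|/not_all_ex_not [w1 /eqP omega_u]] := classic (nichols_zero q u); first by left.
have [|/not_all_ex_not [w2 /eqP omega_v]] := classic (nichols_zero q v); first by right.
have supp_u := homogeneous_supported hu.
have supp_v : supported v (all (predC (mu du))).
  move=> w /(homogeneous_supported hv) /allP dv_w; apply/allP => i /dv_w dv_i.
  by move: (hdisj i); rewrite dv_i andbT.
have := mulf_neq0 omega_u omega_v.
rewrite -(omega_tmul q supp_u supp_v).
- by rewrite [omega _ _ _]huv eqxx.
- exact: omega_supported omega_u.
- exact: omega_supported omega_v.
Qed.
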